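(* Let $n$ be even. For $i=1,2$ let $E_i=\{e^{(i)}_0,\dots,e^{(i)}_{2^{\lambda_i}-1}\}\subset\mathbb F_2^n$ be a linear subspace of dimension $\lambda_i$, listed in lexicographic order (so $e^{(i)}_0=\mathbf 0_n$), let $v_i\in\mathbb F_2^n$, and let $S^{[i]}=v_i\oplus E_i=\{\omega^{(i)}_j=v_i\oplus e^{(i)}_j\}$, where $S^{[1]}\cap S^{[2]}=\emptyset$ and $2^{\lambda_1}+2^{\lambda_2}<2^n$. Let $f^*_{[i]}:S^{[i]}\to\mathbb F_2$, and regard $f^*_{[i]}$ also as a function on $\mathbb F_2^{\lambda_i}$ via $f^*_{[i]}(x_j):=f^*_{[i]}(\omega^{(i)}_j)$, where $\mathbb F_2^{\lambda_i}=\{x_0,\dots,x_{2^{\lambda_i}-1}\}$ is in lexicographic order. Suppose that, as functions on $\mathbb F_2^{\lambda_i}$, $f^*_{[i]}$ is $s_i$-plateaued ($i=1,2$), and that $f^*_{[1]},f^*_{[2]}$ are totally disjoint spectra functions (as functions on $S^{[1]},S^{[2]}$). Define $W:\mathbb F_2^n\to\mathbb Z$ by $W(u)=0$ for $u\notin S^{[1]}\cup S^{[2]}$, $W(u)=(-1)^{f^*_{[1]}(u)}2^{(n+2)/2}$ for $u\in S^{[1]}$, $W(u)=(-1)^{f^*_{[2]}(u)}2^{n/2}$ for $u\in S^{[2]}$. Then $W$ is the Walsh spectrum of a Boolean function $f:\mathbb F_2^n\to\mathbb F_2$ (which then has $W_f(u)\in\{0,\pm2^{n/2},\pm2^{(n+2)/2}\}$)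 if and only if $\lambda_1+s_1+2=\lambda_2+s_2=n$.
   Context: $W_f(\omega)=\sum_{x}(-1)^{f(x)\oplus\omega\cdot x}$. A function $g:\mathbb F_2^\lambda\to\mathbb F_2$ is $s$-plateaued if $W_g(\omega)\in\{0,\pm2^{(\lambda+s)/2}\}$ for all $\omega$. Lexicographic order: $e$ precedes $e'$ iff the integer with binary expansion $e$ (first coordinate most significant) is smaller. Totally disjoint spectra functions: for disjoint $S^{[1]},S^{[2]}\subset\mathbb F_2^n$ and functions $f^*_{[i]}:S^{[i]}\to\mathbb F_2$, put $X_i(u)=\sum_{\omega\in S^{[i]}}(-1)^{f^*_{[i]}(\omega)\oplus u\cdot\omega}$; the pair is totally disjoint spectra if $X_1(u)X_2(u)=0$ and $|X_1(u)|+|X_2(u)|>0$ for all $u\in\mathbb F_2^n$. *)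

From HB Require Import structures.
From mathcomp Require Import all_boot all_order all_algebra.
Set Implicit Arguments. Unset Strict Implicit. Unset Printing Implicit Defensive.
Import Order.TTheory GRing.Theory Num.Theory.
Local Open Scope ring_scope.

Notation vecF2 n := 'rV['F_2]_n.

Definition sgnF2 (a : 'F_2) : int := (-1) ^+ (a == 1).

Definition dotF2 n (w x : vecF2 n) : 'F_2 := \sum_(i < n) w 0 i * x 0 i.

Definition walsh n (f : vecF2 n -> 'F_2) (w : vecF2 n) : int :=
  \sum_(x : vecF2 n) sgnF2 (f x + dotF2 w x).

(* g is s-plateaued on F_2^lam : W_g(w) in {0, +-2^((lam+s)/2)} for all w.
   (lam+s must be even for 2^((lam+s)/2) to be an integer; if it is odd the
   literal condition forces W_g = 0 everywhere, impossible by Parseval.) *)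
Definition plateaued lam (s : nat) (g : vecF2 lam -> 'F_2) : Prop :=
  ~~ odd (lam + s) /\
  forall w, walsh g w \in [:: 0; (2 ^+ ((lam + s)./2))%:~R; - (2 ^+ ((lam + s)./2))%:~R]%R.

Definition lexrank n (e : vecF2 n) : nat :=
  \sum_(i < n) (nat_of_bool (e ord0 i == 1%R) * 2 ^ (n.-1 - i))%N.

Definition lexlist n (E : {vspace vecF2 n}) : seq (vecF2 n) :=
  sort (fun a b => (lexrank a <= lexrank b)%N)
       [seq x <- enum [set: vecF2 n] | x \in E].

Definition inCoset n (v : vecF2 n) (E : {vspace vecF2 n}) (u : vecF2 n) : bool :=
  (u - v) \in E.

(* f* on S = v (+) E regarded as a function on F_2^lam:
   x_j |-> f*(v + e_j), with x_j, e_j the j-th elements in lexicographic order *)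
Definition pullback n lam (v : vecF2 n) (E : {vspace vecF2 n})
    (f : vecF2 n -> 'F_2) : vecF2 lam -> 'F_2 :=
  fun x => f (v + nth 0 (lexlist E) (lexrank x)).

Definition Xsum n (v : vecF2 n) (E : {vspace vecF2 n}) (f : vecF2 n -> 'F_2)
    (u : vecF2 n) : int :=
  \sum_(w : vecF2 n | inCoset v E w) sgnF2 (f w + dotF2 u w).

Definition totally_disjoint_spectra n (v1 v2 : vecF2 n) (E1 E2 : {vspace vecF2 n})
    (f1 f2 : vecF2 n -> 'F_2) : Prop :=
  forall u, Xsum v1 E1 f1 u * Xsum v2 E2 f2 u = 0 /\
            0 < `|Xsum v1 E1 f1 u| + `|Xsum v2 E2 f2 u|.

Definition Wspec n (v1 v2 : vecF2 n) (E1 E2 : {vspace vecF2 n})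
    (f1 f2 : vecF2 n -> 'F_2) (u : vecF2 n) : int :=
  if inCoset v1 E1 u then sgnF2 (f1 u) * (2 ^+ (n./2 + 1))%:~R
  else if inCoset v2 E2 u then sgnF2 (f2 u) * (2 ^+ n./2)%:~R
  else 0.

Arguments pullback {n} lam v E f x.

(* The inverse Walsh transform of W is 2^(n/2+1) X_1 + 2^(n/2) X_2, where X_i are the
   coset sums of the totally disjoint spectra, and W is a Walsh spectrum iff this inverse
   transform has absolute value 2^n everywhere.  Listing a subspace E in lexicographic
   order is an F_2-linear bijection F_2^lambda -> E: the elements vanishing at the
   leading coordinate of E form a subspace that comes first, and the remaining ones are
   its translate by their least element, listed in the same order.  Hence X_i(u) is, up
   to sign, a Walsh coefficient of the s_i-plateaued function f*_[i] on F_2^lambda_i, so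
   |X_i| only takes the values 0 and 2^((lambda_i+s_i)/2).  By total disjointness
   exactly one X_i is nonzero at each point, and both are nonzero somewhere; so
   |inverse transform| = 2^n everywhere iff n/2+1+(lambda_1+s_1)/2 = n and
   n/2+(lambda_2+s_2)/2 = n. *)

From HB Require Import structures.
From mathcomp Require Import all_boot all_order all_algebra all_field zify.
Import Order.TTheory GRing.Theory Num.Theory.
Set Implicit Arguments. Unset Strict Implicit. Unset Printing Implicit Defensive.
Local Open Scope ring_scope.

Lemma F2_cases (a : 'F_2) : a = 0 \/ a = 1.
Proof. by case: a => [[|[|m]] Hm]; [left|right|]; try apply: val_inj. Qed.

Lemma addF2xx (x : 'F_2) : x + x = 0.
Proof. exact: addrr_pchar2 (pchar_Fp (isT : prime 2)) x. Qed.

Lemma addF2vv n (a : vecF2 n) : a + a = 0.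
Proof. by apply/rowP => j; rewrite !mxE addF2xx. Qed.

Lemma sgnF2D a b : sgnF2 (a + b) = sgnF2 a * sgnF2 b.
Proof. by case: (F2_cases a) => ->; case: (F2_cases b) => ->. Qed.

Lemma normr_sgnF2 a : `|sgnF2 a| = 1.
Proof. by case: (F2_cases a) => ->. Qed.

Lemma dotF2C n (u x : vecF2 n) : dotF2 u x = dotF2 x u.
Proof. by apply: eq_bigr => i _; rewrite mulrC. Qed.

Lemma dotF2Dr n (u x y : vecF2 n) : dotF2 u (x + y) = dotF2 u x + dotF2 u y.
Proof. by rewrite /dotF2 -big_split; apply: eq_bigr => i _; rewrite mxE mulrDr. Qed.

Lemma dotF2Dl n (u w x : vecF2 n) : dotF2 (u + w) x = dotF2 u x + dotF2 w x.
Proof. by rewrite !(dotF2C _ x) dotF2Dr. Qed.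

Lemma dotF2r0 n (u : vecF2 n) : dotF2 u 0 = 0.
Proof. by rewrite /dotF2 big1 // => i _; rewrite mxE mulr0. Qed.

Lemma dotF2_delta n (u : vecF2 n) i : dotF2 u (delta_mx 0 i) = u 0 i.
Proof.
rewrite /dotF2 (bigD1 i) //= big1 ?addr0 => [|j /negbTE ji]; first by rewrite mxE !eqxx mulr1.
by rewrite mxE ji andbF mulr0.
Qed.

(* The inverse Walsh transform, without the normalising factor 2^-n. *)
Definition iwalsh n (F : vecF2 n -> int) (x : vecF2 n) : int :=
  \sum_(u : vecF2 n) F u * sgnF2 (dotF2 u x).

Lemma walshE n (f : vecF2 n -> 'F_2) w : walsh f w = iwalsh (sgnF2 \o f) w.
Proof. by apply: eq_bigr => x _; rewrite sgnF2D dotF2C. Qed.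

Lemma sum_sgnF2_dot n (u : vecF2 n) :
  \sum_(x : vecF2 n) sgnF2 (dotF2 u x) = if u == 0 then 2 ^+ n else 0.
Proof.
have [->|u_neq0] := eqVneq u 0.
  rewrite (eq_bigr (fun=> 1)) => [|x _]; last by rewrite dotF2C dotF2r0.
  by rewrite sumr_const card_mx card_Fp // mul1n natrX.
have [i ui] : exists i, u 0 i = 1.
  by case/rV0Pn: u_neq0 => i ui_neq0; exists i; case: (F2_cases (u 0 i)) ui_neq0 => ->.
set S := \sum_x _; have S_opp : S = - S.
  rewrite {1}/S (reindex_inj (addIr (delta_mx 0 i))) -sumrN.
  by apply: eq_bigr => x _; rewrite dotF2Dr dotF2_delta ui sgnF2D mulrN1.
have : S *+ 2 = 0 by rewrite mulr2n {1}S_opp addNr.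
by move/eqP; rewrite mulrn_eq0 => /eqP.
Qed.

Lemma addF2_eq0 n (u w : vecF2 n) : (u + w == 0) = (u == w).
Proof.
apply/eqP/eqP => [uw0|->]; last exact: addF2vv.
by rewrite -[u]addr0 -(addF2vv w) addrA uw0 add0r.
Qed.

Lemma iwalshK n (F : vecF2 n -> int) w : iwalsh (iwalsh F) w = 2 ^+ n * F w.
Proof.
rewrite /iwalsh; under eq_bigr do rewrite mulr_suml.
rewrite exchange_big /=.
under eq_bigr => u _ do
  under eq_bigr => x _ do rewrite -mulrA -sgnF2D (dotF2C x w) -dotF2Dl.
under eq_bigr => u _ do rewrite -mulr_sumr sum_sgnF2_dot addF2_eq0.
rewrite (bigD1 w) //= eqxx big1 ?addr0 => [|u /negbTE ->]; last by rewrite mulr0.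
by rewrite mulrC.
Qed.

Lemma walsh_spectrumP n (W : vecF2 n -> int) :
  (exists f : vecF2 n -> 'F_2, forall u, walsh f u = W u) <->
  (forall x, `|iwalsh W x| = 2 ^+ n).
Proof.
have pow2n_gt0 : (0 : int) < 2 ^+ n by rewrite exprn_gt0.
split=> [[f fW] x|W_inv].
  have -> : iwalsh W x = iwalsh (iwalsh (sgnF2 \o f)) x.
    by apply: eq_bigr => u _; rewrite -fW walshE.
  by rewrite iwalshK normrM normr_sgnF2 mulr1 gtr0_norm.
pose f x : 'F_2 := if 0 <= iwalsh W x then 0 else 1.
have W_invE x : iwalsh W x = 2 ^+ n * sgnF2 (f x).
  rewrite /f -(W_inv x); case: ifP => [/ger0_norm -> | /negbT]; first by rewrite mulr1.
  by rewrite -ltNge => /ltr0_norm ->; rewrite mulrN1 opprK.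
exists f => w; apply: (mulfI (lt0r_neq0 pow2n_gt0)).
rewrite walshE -[RHS]iwalshK [in LHS]/iwalsh mulr_sumr.
by apply: eq_bigr => u _; rewrite [in RHS]W_invE mulrA.
Qed.

Definition row_tail k (y : vecF2 k.+1) : vecF2 k := \row_i y 0 (lift ord0 i).

Lemma lexrank_tail k (y : vecF2 k.+1) :
  lexrank y = ((y 0 0 == 1)%R * 2 ^ k + lexrank (row_tail y))%N.
Proof.
rewrite /lexrank big_ord_recl subn0; congr (_ + _)%N.
by apply: eq_bigr => i _; rewrite mxE subnS -subn1 subnAC subn1.
Qed.

Lemma lexrank_lt_pow2 n (e : vecF2 n) : (lexrank e < 2 ^ n)%N.
Proof.
elim: n e => [|n IHn] e; first by rewrite /lexrank big_ord0.
by rewrite lexrank_tail expnS; have := IHn (row_tail e); case: (_ == 1) => /=; lia.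
Qed.

Definition lex_lt_at n (e e' : vecF2 n) (i : 'I_n) : Prop :=
  [/\ forall j : 'I_n, (j < i)%N -> e 0 j = e' 0 j, e 0 i = 0 & e' 0 i = 1].

Lemma lexrank_lt_at n (e e' : vecF2 n) i :
  lex_lt_at e e' i -> (lexrank e < lexrank e')%N.
Proof.
elim: n e e' i => [|n IHn] e e' i; first by case: i.
rewrite !lexrank_tail; case: (unliftP ord0 i) => [i' ->|->] [e_e' ei e'i].
  have tail_lt : lex_lt_at (row_tail e) (row_tail e') i'.
    by split=> [j ji||]; rewrite !mxE // e_e'.
  by rewrite e_e' //; have := IHn _ _ _ tail_lt; lia.
by rewrite ei e'i /=; have := lexrank_lt_pow2 (row_tail e); lia.
Qed.

Lemma lex_lt_at_total n (e e' : vecF2 n) :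
  e != e' -> exists i, lex_lt_at e e' i \/ lex_lt_at e' e i.
Proof.
move=> e_neq_e'.
have [i0 ei0] : exists i, e 0 i != e' 0 i.
  by move: e_neq_e'; rewrite -subr_eq0 => /rV0Pn[i]; rewrite !mxE subr_eq0; exists i.
case: (arg_minnP (P := fun i => e 0 i != e' 0 i) val ei0) => i ei i_min; exists i.
have e_e' (j : 'I_n) : (j < i)%N -> e 0 j = e' 0 j.
  by move=> ji; apply/eqP; apply: contraTT ji => /i_min; rewrite -leqNgt.
case: (F2_cases (e 0 i)) (F2_cases (e' 0 i)) ei => ei [] e'i; rewrite ei e'i // => _.
  by left.
by right; split=> // j /e_e' ->.
Qed.

Lemma lexrank_inj n : injective (@lexrank n).
Proof.
move=> e e' eq_rank; apply/eqP; apply: contraT => /lex_lt_at_total[i [] /lexrank_lt_at];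
  by rewrite eq_rank ltnn.
Qed.

Lemma lexrank_ltP n (e e' : vecF2 n) :
  (lexrank e < lexrank e')%N -> exists i, lex_lt_at e e' i.
Proof.
move=> lt_e_e'; have : e != e' by apply: contraTneq lt_e_e' => ->; rewrite ltnn.
case/lex_lt_at_total => i [] lt_at; first by exists i.
by have := lexrank_lt_at lt_at; rewrite ltnNge (ltnW lt_e_e').
Qed.

Definition lex_lt n : rel (vecF2 n) := fun e e' => (lexrank e < lexrank e')%N.

Definition lexenum n (G : {set vecF2 n}) : seq (vecF2 n) :=
  sort (fun e e' => (lexrank e <= lexrank e')%N) [seq x <- enum [set: vecF2 n] | x \in G].

Lemma lex_lt_trans n : transitive (@lex_lt n).
Proof. by move=> e e' e''; apply: ltn_trans. Qed.

Lemma mem_lexenum n (G : {set vecF2 n}) : lexenum G =i G.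
Proof. by move=> x; rewrite mem_sort mem_filter mem_enum in_setT andbT. Qed.

Lemma lexenum_uniq n (G : {set vecF2 n}) : uniq (lexenum G).
Proof. by rewrite sort_uniq filter_uniq // enum_uniq. Qed.

Lemma size_lexenum n (G : {set vecF2 n}) : size (lexenum G) = #|G|.
Proof. by rewrite -(card_uniqP (lexenum_uniq G)); apply: eq_card; apply: mem_lexenum. Qed.

Lemma lexenum_sorted n (G : {set vecF2 n}) : sorted (@lex_lt n) (lexenum G).
Proof.
have -> : sorted (@lex_lt n) (lexenum G) = sorted ltn (map (@lexrank n) (lexenum G)).
  by rewrite sorted_map.
rewrite ltn_sorted_uniq_leq (map_inj_uniq (@lexrank_inj n)) lexenum_uniq sorted_map.
by apply: sort_sorted => e e'; apply: leq_total.
Qed.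

Lemma lexenumE n (G : {set vecF2 n}) s : sorted (@lex_lt n) s -> s =i G -> s = lexenum G.
Proof.
move=> s_sorted sG; apply: (irr_sorted_eq (@lex_lt_trans n)) s_sorted (lexenum_sorted G) _.
  by move=> e; apply: ltnn.
by move=> x; rewrite sG mem_lexenum.
Qed.

Section LexenumSplit.
Variables (n : nat) (G : {set vecF2 n}) (p : 'I_n) (a : vecF2 n).
Hypothesis G_closed : GRing.nmod_closed G.
Hypothesis G_lead : forall g (j : 'I_n), g \in G -> (j < p)%N -> g 0 j = 0.
Hypotheses (a_G : a \in G) (a_p : a 0 p = 1).
Hypothesis a_min : forall g, g \in G -> g 0 p = 1 -> (lexrank a <= lexrank g)%N.

Let H := [set g in G | g 0 p == 0].
Let addG : {in G &, forall x y, x + y \in G} := G_closed.2.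

Lemma lower_half_closed : GRing.nmod_closed H.
Proof.
split=> [|x y]; first by rewrite inE G_closed.1 mxE.
rewrite !inE => /andP[xG /eqP xp] /andP[yG /eqP yp].
by rewrite addG //= mxE xp yp addr0.
Qed.

Lemma lex_lt_lower_upper h g : h \in H -> g \in G -> g 0 p = 1 -> lex_lt h g.
Proof.
rewrite inE => /andP[hG /eqP hp] gG gp; apply: (@lexrank_lt_at _ _ _ p).
by split=> // j jp; rewrite !G_lead.
Qed.

Lemma lex_lt_translate h h' :
  h \in H -> h' \in H -> lex_lt h h' -> lex_lt (a + h) (a + h').
Proof.
rewrite !inE => /andP[hG /eqP hp] /andP[h'G /eqP h'p] /lexrank_ltP[i [h_h' hi h'i]].
case: (F2_cases (a 0 i)) => ai.
  by apply: (@lexrank_lt_at _ _ _ i); split=> [j ji||]; rewrite !mxE;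
    [rewrite h_h' | rewrite ai hi add0r | rewrite ai h'i add0r].
have a'_G : a + h + h' \in G by rewrite !addG.
have : lex_lt (a + h + h') a.
  apply: (@lexrank_lt_at _ _ _ i); split=> [j ji||]; rewrite ?ai //.
    by rewrite !mxE h_h' // -addrA addF2xx addr0.
  by rewrite !mxE ai hi h'i addr0 addF2xx.
by rewrite /lex_lt ltnNge a_min // !mxE a_p hp h'p !addr0.
Qed.

Lemma lexenum_split : lexenum G = lexenum H ++ map (+%R a) (lexenum H).
Proof.
have lexenumH_in : all (mem H) (lexenum H) by apply/allP => h; rewrite mem_lexenum.
have upper_sorted : sorted (@lex_lt n) (map (+%R a) (lexenum H)).
  apply: homo_sorted_in lexenumH_in (lexenum_sorted H).
  by move=> h h'; apply: lex_lt_translate.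
have upper_in x : x \in G -> x 0 p = 1 -> a + x \in H.
  by move=> xG xp; rewrite inE addG //= mxE a_p xp addF2xx.
symmetry; apply: lexenumE => [|x].
  rewrite !sorted_pairwise in upper_sorted *; try exact: lex_lt_trans.
  rewrite pairwise_cat upper_sorted -sorted_pairwise ?lexenum_sorted ?andbT //;
    last exact: lex_lt_trans.
  apply/allrelP => h _ /[!mem_lexenum] hH /mapP[h' /[!mem_lexenum] h'H ->].
  move: h'H; rewrite inE => /andP[h'G /eqP h'p].
  by apply: lex_lt_lower_upper; rewrite ?addG // mxE a_p h'p addr0.
rewrite mem_cat mem_lexenum.
apply/orP/idP => [[|/mapP[h /[!mem_lexenum] hH ->]]|xG].
- by rewrite inE => /andP[].
- by rewrite addG //; move: hH; rewrite inE => /andP[].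
- case: (F2_cases (x 0 p)) => xp; [left | right]; first by rewrite inE xG xp eqxx.
  apply/mapP; exists (a + x); first by rewrite mem_lexenum upper_in.
  by rewrite addrA addF2vv add0r.
Qed.
End LexenumSplit.

Definition lexnth n k (G : {set vecF2 n}) (y : vecF2 k) : vecF2 n :=
  nth 0 (lexenum G) (lexrank y).

Lemma row_tailD k (y z : vecF2 k.+1) : row_tail (y + z) = row_tail y + row_tail z.
Proof. by apply/rowP => i; rewrite !mxE. Qed.

Lemma exists_lead_coord n (G : {set vecF2 n}) : (1 < #|G|)%N ->
  exists p : 'I_n, (forall g (j : 'I_n), g \in G -> (j < p)%N -> g 0 j = 0) /\
                   exists2 g, g \in G & g 0 p = 1.
Proof.
case/card_gt1P=> x [y [xG yG x_neq_y]].
have [g gG /rV0Pn[i0 gi0]] : exists2 g, g \in G & g != 0.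
  by case: (eqVneq x 0) => [x0 | ?]; [exists y; rewrite // -x0 eq_sym | exists x].
pose one_at (i : 'I_n) := [exists h in G, h 0 i == 1].
have one_at_i0 : one_at i0.
  by apply/exists_inP; exists g => //; case: (F2_cases (g 0 i0)) gi0 => ->.
case: (arg_minnP val one_at_i0) => p /exists_inP[g' g'G /eqP g'p] p_min.
exists p; split; last by exists g'.
move=> h j hG jp; case: (F2_cases (h 0 j)) => // hj.
have : one_at j by apply/exists_inP; exists h; rewrite ?hj.
by move/p_min; rewrite leqNgt jp.
Qed.

Lemma lexnthD k : forall n (G : {set vecF2 n}),
  GRing.nmod_closed G -> #|G| = (2 ^ k)%N -> {morph @lexnth n k G : y z / y + z}.
Proof.
elim: k => [|k IHk] n G G_closed cardG y z.
  have [x G_x] : exists x, G = [set x] by apply/cards1P; rewrite cardG.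
  have x0 : 0 = x by apply/set1P; rewrite -G_x G_closed.1.
  have lexnth0 (w : vecF2 0) : lexnth G w = 0.
    apply/set1P; rewrite x0 -G_x -mem_lexenum mem_nth //.
    by rewrite size_lexenum cardG /lexrank big_ord0.
  by rewrite !lexnth0 addr0.
have G_gt1 : (1 < #|G|)%N by rewrite cardG expnS; have := expn_gt0 2 k; lia.
have [p [G_lead [g gG gp]]] := exists_lead_coord G_gt1.
pose upper g := (g \in G) && (g 0 p == 1).
have upper_g : upper g by rewrite /upper gG gp eqxx.
case: (arg_minnP (@lexrank n) upper_g) => a /andP[aG /eqP ap] a_min.
have a_min' g' : g' \in G -> g' 0 p = 1 -> (lexrank a <= lexrank g')%N.
  by move=> g'G g'p; apply: a_min; rewrite /upper g'G g'p eqxx.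
set H := [set g in G | g 0 p == 0].
have G_split := lexenum_split G_closed G_lead aG ap a_min'.
have cardH : #|H| = (2 ^ k)%N.
  move/(congr1 size): G_split; rewrite size_cat size_map !size_lexenum cardG expnS -/H.
  by lia.
have lexnthS (w : vecF2 k.+1) : lexnth G w =
    if w 0 0 == 1 then a + lexnth H (row_tail w) else lexnth H (row_tail w).
  rewrite /lexnth G_split lexrank_tail nth_cat size_lexenum cardH.
  have := lexrank_lt_pow2 (row_tail w).
  case: (w 0 0 == 1) => /= tail_lt; last by rewrite tail_lt.
  by rewrite mul1n ltnNge leq_addr addKn (nth_map 0) // size_lexenum cardH.
rewrite !lexnthS row_tailD (IHk _ H (lower_half_closed p G_closed) cardH) mxE.
by case: (F2_cases (y 0 0)) (F2_cases (z 0 0)) => -> [] ->;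
  rewrite ?addr0 ?add0r ?addF2xx /=;
  [| rewrite addrCA | rewrite addrA | rewrite addrACA addF2vv add0r].
Qed.

Definition adjointF2 k n (phi : vecF2 k -> vecF2 n) (u : vecF2 n) : vecF2 k :=
  \row_i dotF2 u (phi (delta_mx 0 i)).

Lemma dotF2_adjoint k n (phi : vecF2 k -> vecF2 n) : {morph phi : y z / y + z} ->
  forall u y, dotF2 u (phi y) = dotF2 (adjointF2 phi u) y.
Proof.
move=> phiD u y; have phi0 : phi 0 = 0.
  by apply: (addrI (phi 0)); rewrite -phiD !addr0.
rewrite {1}(row_sum_delta y) (big_morph phi phiD phi0).
rewrite (big_morph (dotF2 u) (@dotF2Dr n u) (dotF2r0 u)) [in RHS]/dotF2.
by apply: eq_bigr => i _; rewrite mxE; case: (F2_cases (y 0 i)) => ->;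
  rewrite ?scale0r ?phi0 ?dotF2r0 ?mulr0 ?scale1r ?mulr1.
Qed.

Section LexCoordinates.
Variables (n : nat) (E : {vspace vecF2 n}).
Let GE := [set x | x \in E].
Let phi (y : vecF2 (\dim E)) := lexnth GE y.

Lemma lexlist_lexenum : lexlist E = lexenum GE.
Proof. by rewrite /lexlist /lexenum; congr sort; apply: eq_filter => x; rewrite inE. Qed.

Let card_GE : #|GE| = (2 ^ \dim E)%N.
Proof. by rewrite cardsE card_vspace card_Fp. Qed.

Lemma lexnth_vspaceD : {morph phi : y z / y + z}.
Proof.
apply: lexnthD card_GE; split=> [|x y]; rewrite !inE ?mem0v //; exact: memvD.
Qed.

Lemma sum_vspace_lexnth (F : vecF2 n -> int) :
  \sum_(x in E) F x = \sum_(y : vecF2 (\dim E)) F (phi y).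
Proof.
have phi_inj : injective phi.
  move=> y z /eqP; rewrite /phi /lexnth nth_uniq ?lexenum_uniq ?size_lexenum ?card_GE
    ?lexrank_lt_pow2 //.
  by move/eqP/lexrank_inj.
have phi_onto : phi @: setT = GE.
  apply/eqP; rewrite eqEcard (card_imset _ phi_inj) cardsT card_mx card_Fp // mul1n.
  rewrite card_GE leqnn andbT.
  apply/subsetP => _ /imsetP[y _ ->]; rewrite -mem_lexenum /phi /lexnth mem_nth //.
  by rewrite size_lexenum card_GE lexrank_lt_pow2.
rewrite (eq_bigl (mem GE)); last by move=> x; rewrite /= inE.
rewrite -phi_onto big_imset /=; last by move=> y z _ _; apply: phi_inj.
by apply: eq_bigl => y; rewrite in_setT.
Qed.

End LexCoordinates.

Lemma Xsum_pullback n (E : {vspace vecF2 n}) v f u :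
  Xsum v E f u = sgnF2 (dotF2 u v) *
    walsh (pullback (\dim E) v E f) (adjointF2 (lexnth [set x | x \in E]) u).
Proof.
rewrite /Xsum (reindex_inj (addrI v)).
have coset_shift e : inCoset v E (v + e) = (e \in E) by rewrite /inCoset addrAC subrr add0r.
under eq_bigl do rewrite coset_shift.
rewrite sum_vspace_lexnth /walsh mulr_sumr.
apply: eq_bigr => y _.
rewrite /pullback lexlist_lexenum -/(lexnth _ y) dotF2Dr.
by rewrite (dotF2_adjoint (@lexnth_vspaceD _ E)) -sgnF2D addrCA addrA.
Qed.

Lemma Xsum_plateaued n (E : {vspace vecF2 n}) v f s :
  plateaued s (pullback (\dim E) v E f) ->
  forall u, Xsum v E f u = 0 \/ `|Xsum v E f u| = 2 ^+ ((\dim E + s)./2).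
Proof.
move=> [_ walsh_vals] u; rewrite Xsum_pullback normrM normr_sgnF2 mul1r.
move: (walsh_vals (adjointF2 (lexnth [set x | x \in E]) u)); rewrite !inE intz.
by case/or3P=> /eqP ->; [left; rewrite mulr0 | right; rewrite ?normrN ger0_norm ?exprn_ge0..].
Qed.

Lemma XsumE n v (E : {vspace vecF2 n}) f :
  Xsum v E f =1 iwalsh (fun w => if inCoset v E w then sgnF2 (f w) else 0).
Proof.
move=> x; rewrite /Xsum /iwalsh big_mkcond /=; apply: eq_bigr => w _.
by case: ifP; rewrite ?mul0r // sgnF2D dotF2C.
Qed.

Lemma Xsum_neq0 n v (E : {vspace vecF2 n}) f : exists x, Xsum v E f x != 0.
Proof.
apply/existsP; apply: contraT => /existsPn Xsum0.
have := iwalshK (fun w => if inCoset v E w then sgnF2 (f w) else 0) v.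
rewrite {1}/iwalsh big1 => [|x _]; last by rewrite -XsumE (eqP (negPn (Xsum0 x))) mul0r.
rewrite /inCoset subrr mem0v => /esym/eqP.
by rewrite mulf_eq0 expf_eq0 andbF -normr_eq0 normr_sgnF2.
Qed.

Lemma iwalsh_Wspec n (v1 v2 : vecF2 n) E1 E2 f1 f2 :
  (forall u, ~~ (inCoset v1 E1 u && inCoset v2 E2 u)) ->
  forall x, iwalsh (Wspec v1 v2 E1 E2 f1 f2) x =
    2 ^+ (n./2 + 1) * Xsum v1 E1 f1 x + 2 ^+ n./2 * Xsum v2 E2 f2 x.
Proof.
move=> disj x; rewrite !XsumE /iwalsh !mulr_sumr -big_split; apply: eq_bigr => u _.
rewrite /Wspec !intz; move: (disj u).
by case: (inCoset v1 E1 u); case: (inCoset v2 E2 u) => //= _;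
  rewrite !(mulr0, mul0r, addr0, add0r) // -mulrA mulrCA.
Qed.

Lemma pow2_combination_normP (T : Type) (F X1 X2 : T -> int) (a1 a2 h1 h2 N : nat) :
  (forall x, F x = 2 ^+ a1 * X1 x + 2 ^+ a2 * X2 x) ->
  (forall x, X1 x * X2 x = 0 /\ 0 < `|X1 x| + `|X2 x|) ->
  (forall x, X1 x = 0 \/ `|X1 x| = 2 ^+ h1) ->
  (forall x, X2 x = 0 \/ `|X2 x| = 2 ^+ h2) ->
  (exists x, X1 x != 0) -> (exists x, X2 x != 0) ->
  (forall x, `|F x| = 2 ^+ N) <-> (a1 + h1 = N /\ a2 + h2 = N)%N.
Proof.
move=> FE disj X1_vals X2_vals [x1 X1x1] [x2 X2x2].
have normF x : `|F x| = if X1 x == 0 then 2 ^+ (a2 + h2) else 2 ^+ (a1 + h1).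
  have [X12 pos] := disj x; rewrite FE !exprD; case: eqP => [X1x | /eqP X1x].
    case: (X2_vals x) => [X2x|X2x]; first by move: pos; rewrite X1x X2x normr0 addr0 ltxx.
    by rewrite X1x mulr0 add0r normrM X2x ger0_norm ?exprn_ge0.
  have X2x : X2 x = 0 by move/eqP: X12; rewrite mulf_eq0 (negbTE X1x) => /eqP.
  case: (X1_vals x) => [X1x0|X1x']; first by rewrite X1x0 eqxx in X1x.
  by rewrite X2x mulr0 addr0 normrM X1x' ger0_norm ?exprn_ge0.
have pow2_inj : injective (fun k : nat => (2 : int) ^+ k) by apply: ieexprIn.
split=> [normF_N | [a1h1 a2h2] x]; last by rewrite normF a1h1 a2h2 if_same.
split; apply: pow2_inj.
  by have := normF_N x1; rewrite normF (negbTE X1x1).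
have X1x2 : X1 x2 = 0 by move/eqP: (disj x2).1; rewrite mulf_eq0 (negbTE X2x2) orbF => /eqP.
by have := normF_N x2; rewrite normF X1x2 eqxx.
Qed.

Theorem mainTheorem3 (n lam1 lam2 s1 s2 : nat)
    (E1 E2 : {vspace 'rV['F_2]_n}) (v1 v2 : 'rV['F_2]_n)
    (f1 f2 : 'rV['F_2]_n -> 'F_2) :
  ~~ odd n ->
  \dim E1 = lam1 -> \dim E2 = lam2 ->
  (forall u, ~~ (inCoset v1 E1 u && inCoset v2 E2 u)) ->
  (2 ^ lam1 + 2 ^ lam2 < 2 ^ n)%N ->
  plateaued s1 (pullback lam1 v1 E1 f1) ->
  plateaued s2 (pullback lam2 v2 E2 f2) ->
  totally_disjoint_spectra v1 v2 E1 E2 f1 f2 ->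
  ((exists f : 'rV['F_2]_n -> 'F_2, forall u, walsh f u = Wspec v1 v2 E1 E2 f1 f2 u)
   <-> (lam1 + s1 + 2 = n /\ lam2 + s2 = n)%N).
Proof.
move=> n_even <- <- disj _ plat1 plat2 tds.
apply: iff_trans (walsh_spectrumP _) _.
apply: iff_trans (pow2_combination_normP n (iwalsh_Wspec f1 f2 disj) tds
  (Xsum_plateaued plat1) (Xsum_plateaued plat2) (Xsum_neq0 _ _ _) (Xsum_neq0 _ _ _)) _.
have := even_halfK n_even; have := even_halfK plat1.1; have := even_halfK plat2.1.
rewrite -!muln2; lia.
Qed.
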